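(* For every $m\geq1$ and every $i\in\{1,\dots,N\}$, $$C^{(2m+1)}_{ii}\cdot v=\lambda_i\, C^{(2m)}_{ii}\cdot v-G_i\,C^{(2m)}_{-i,i}\cdot v.$$
   Context: Let $N\geq1$, $I=\{-N,\dots,-1,1,\dots,N\}$, and for $k\in I$ put $\bar k=0$ if $k>0$, $\bar k=1$ if $k<0$. The Lie superalgebra $\mathfrak{q}(N)$ over $\mathbb{C}$ is spanned by elements $F_{ij}$ ($i,j\in I$) with $F_{-i,-j}=F_{ij}$ (realized as $F_{ij}=E_{ij}+E_{-i,-j}\in\mathfrak{gl}(N|N)$), $F_{ij}$ of parity $\bar\imath+\bar\jmath\bmod 2$, and supercommutator $$[F_{ij}, F_{kl}] = \delta_{kj} F_{il} - (-1)^{(\bar{\imath}+ \bar{\jmath})(\bar{k} + \bar{l})} \delta_{il} F_{kj} + \delta_{k,-j} F_{-i,l} - (-1)^{(\bar{\imath} + \bar{\jmath})(\bar{k} + \bar{l})} \delta_{-i,l} F_{k,-j}.$$ For $n\geq1$ define $C^{(n)}_{ij}\in U(\mathfrak{q}(N))$ by $$C^{(n)}_{ij} = \sum_{k_1,\ldots,k_{n-1}\in I}F_{ik_1} (-1)^{\bar{k}_1} F_{k_1k_2} (-1)^{\bar{k}_2} \cdots F_{k_{n-2}k_{n-1}} (-1)^{\bar{k}_{n-1}} F_{k_{n-1}j}$$ (so $C^{(1)}_{ij}=F_{ij}$). For $i>0$ let $G_i=F_{-i,i}$ $(=F_{i,-i})$. Let $V$ be a representation of $\mathfrak{q}(N)$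 and $v\in V$ a vector such that $F_{ij}\cdot v=0$ whenever $|i|<|j|$, and $F_{ii}\cdot v=\lambda_i v$ for $i=1,\dots,N$, where $\lambda_1,\dots,\lambda_N\in\mathbb{C}$. *)

From HB Require Import structures.
From mathcomp Require Import all_boot all_order all_algebra.
Set Implicit Arguments. Unset Strict Implicit. Unset Printing Implicit Defensive.
Import Order.TTheory GRing.Theory Num.Theory.
Local Open Scope ring_scope.

(* Index set I = {-N,...,-1,1,...,N}.  The pair (a, b) with a : 'I_N encodes
   the index  (a+1)  if b = false  and  -(a+1)  if b = true.
   Hence |k| = a+1 and bar k = b. *)
Definition qidx (N : nat) : finType := ('I_N * bool)%type.

Definition qabs {N} (k : qidx N) : nat := (k.1).+1.
Definition qpar {N} (k : qidx N) : bool := k.2.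
Definition qneg {N} (k : qidx N) : qidx N := (k.1, ~~ k.2).
Definition qpos {N} (a : 'I_N) : qidx N := (a, false).

Definition qsgn {K : pzRingType} (b : bool) : K := (-1) ^+ b.

(* rho : I -> I -> End(V) is a representation of q(N), where rho i j is the
   action of F_{ij}: the identification F_{-i,-j} = F_{ij} and the
   supercommutator relations of q(N) hold. *)
Definition is_qrep (K : pzRingType) (N : nat) (V : lmodType K)
    (rho : qidx N -> qidx N -> {linear V -> V}) : Prop :=
  (forall i j, rho (qneg i) (qneg j) =1 rho i j) /\
  (forall i j k l (w : V),
     let s : K := qsgn ((qpar i (+) qpar j) && (qpar k (+) qpar l)) in
     rho i j (rho k l w) - s *: rho k l (rho i j w) =
       (k == j)%:R *: rho i l w
       - s *: ((i == l)%:R *: rho k j w)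
       + (k == qneg j)%:R *: rho (qneg i) l w
       - s *: ((qneg i == l)%:R *: rho k (qneg j) w)).

(* Caux n i j w = C^{(n+1)}_{ij} . w, using
   C^{(n+1)}_{ij} = sum_k F_{ik} (-1)^{bar k} C^{(n)}_{kj}. *)
Fixpoint Caux (K : pzRingType) (N : nat) (V : lmodType K)
    (rho : qidx N -> qidx N -> {linear V -> V}) (n : nat)
    (i j : qidx N) (w : V) : V :=
  match n with
  | 0 => rho i j w
  | n'.+1 => \sum_(k : qidx N) qsgn (qpar k) *: rho i k (Caux rho n' k j w)
  end.

(* Cact rho n i j w = C^{(n)}_{ij} . w  (for n >= 1). *)
Definition Cact (K : pzRingType) (N : nat) (V : lmodType K)
    (rho : qidx N -> qidx N -> {linear V -> V}) (n : nat)
    (i j : qidx N) (w : V) : V := Caux rho n.-1 i j w.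

(* The argument:
   - Caux_bracket: the entries of C^{(n+1)} are covariant, i.e. they
     supercommute with every F_{ij} by the same rule as the F_{kl};
     this is proved by induction on n from the Leibniz rule.
   - Consequences: C^{(n+1)}_{-i,-j} = (-1)^n C^{(n+1)}_{ij} (Caux_neg), C_{xx}
     preserves F_{xx}-eigenvectors, and, for a highest weight vector v,
     C_{ki} v = 0 when |k| < |i|, while F_{xp} C_{px} v = C_{xx} v -
     (-1)^{bar p} C_{pp} v for x > 0 and |x| < |p|.
   - Expanding C^{(n+2)}_{aa} v = sum_p (-1)^{bar p} F_{ap} C^{(n+1)}_{pa} v
     and grouping p with -p, the pairs with |p| < |a| vanish, those with
     |p| > |a| cancel when n + 1 is even, and the pair {a, -a} gives the
     claimed right-hand side. *)

From HB Require Import structures.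
From mathcomp Require Import all_boot all_order all_algebra.
From mathcomp Require Import ring.
Import Order.TTheory GRing.Theory Num.Theory.
Local Open Scope ring_scope.

Section SignedIndices.
Context {N : nat}.
Implicit Types x y : qidx N.

Lemma qnegK : involutive (@qneg N).
Proof. by case=> a b; rewrite /qneg /= negbK. Qed.

Lemma qneg_inj : injective (@qneg N).
Proof. exact: inv_inj qnegK. Qed.

Lemma qneg_neq x : (x == qneg x) = false.
Proof. by case: x => a b; rewrite /qneg xpair_eqE eqxx; case: b. Qed.

Lemma qabs_neq x y : qabs x != qabs y -> (x == y) = false.
Proof. by apply: contraNF => /eqP ->. Qed.

Lemma sum_qidx {V : nmodType} (f : qidx N -> V) :
  \sum_(p : qidx N) f p = \sum_(b < N) (f (b, false) + f (b, true)).
Proof.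
rewrite [RHS](eq_bigr (fun b => \sum_(c : bool) f (b, c))); last first.
  by move=> b _; rewrite big_bool addrC.
rewrite (pair_big xpredT xpredT (fun b c => f (b, c))) /=.
by apply: eq_bigr => -[].
Qed.

Lemma sum_scale_delta {K : pzRingType} {V : lmodType K} (q : qidx N)
    (c : qidx N -> K) (f : qidx N -> V) :
  \sum_(p : qidx N) (c p * (p == q)%:R) *: f p = c q *: f q.
Proof.
rewrite (bigD1 q) //= eqxx mulr1 big1 ?addr0 // => p /negbTE ->.
by rewrite mulr0 scale0r.
Qed.

Lemma sum_scale_delta' {K : pzRingType} {V : lmodType K} (q : qidx N)
    (c : qidx N -> K) (f : qidx N -> V) :
  \sum_(p : qidx N) (c p * (q == p)%:R) *: f p = c q *: f q.
Proof.
by rewrite -(sum_scale_delta q); apply: eq_bigr => p _; rewrite eq_sym.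
Qed.

End SignedIndices.

Lemma addr_cancel_crossed (V : zmodType) (a b c d e f : V) :
  a - b + c - d + (b - e + d - f) = a - e + c - f.
Proof.
rewrite -!addrA; congr (_ + _).
by rewrite [- d + _]addrCA [c + (b + _)]addrCA addKr [- d + _]addrCA addKr addrCA.
Qed.

Lemma qsgnE (K : pzRingType) (b : bool) : qsgn b = (if b then -1 else 1 : K).
Proof. by case: b; rewrite /qsgn ?expr1 ?expr0. Qed.

Lemma qsgn_neg (K : pzRingType) (b : bool) : qsgn (~~ b) = - qsgn b :> K.
Proof. by rewrite !qsgnE; case: b; rewrite ?opprK. Qed.

Section Representation.
Context {K : comPzRingType} {N : nat} {V : lmodType K}
  {rho : qidx N -> qidx N -> {linear V -> V}}.
Implicit Types (i j k l p : qidx N) (w : V).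

Lemma rhoZ i j (c : K) w : rho i j (c *: w) = c *: rho i j w.
Proof. exact: linearZZ. Qed.
Lemma rhoD i j w w' : rho i j (w + w') = rho i j w + rho i j w'.
Proof. exact: raddfD. Qed.
Lemma rhoB i j w w' : rho i j (w - w') = rho i j w - rho i j w'.
Proof. exact: raddfB. Qed.
Lemma rho0 i j : rho i j 0 = 0.
Proof. exact: raddf0. Qed.
Lemma rhoN i j w : rho i j (- w) = - rho i j w.
Proof. exact: raddfN. Qed.

Lemma CauxZ n i j (c : K) w : Caux rho n i j (c *: w) = c *: Caux rho n i j w.
Proof.
elim: n i j => [|n IH] i j /=; first exact: rhoZ.
rewrite scaler_sumr; apply: eq_bigr => p _.
by rewrite IH rhoZ !scalerA mulrC.
Qed.

Lemma Caux0 n i j : Caux rho n i j 0 = 0.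
Proof. by have := CauxZ n i j 0 0; rewrite !scale0r. Qed.

Definition ssign i j k l : K :=
  qsgn ((qpar i (+) qpar j) && (qpar k (+) qpar l)).

Lemma ssignM i j k p l : ssign i j k p * ssign i j p l = ssign i j k l.
Proof.
rewrite /ssign !qsgnE.
by case: (qpar i) (qpar j) (qpar k) (qpar p) (qpar l) => [] [] [] [] [] /=; ring.
Qed.

Hypothesis rho_rep : is_qrep rho.

Lemma Caux_bracket n i j k l w :
  rho i j (Caux rho n k l w) - ssign i j k l *: Caux rho n k l (rho i j w) =
  (k == j)%:R *: Caux rho n i l w
  - ssign i j k l *: ((i == l)%:R *: Caux rho n k j w)
  + (k == qneg j)%:R *: Caux rho n (qneg i) l w
  - ssign i j k l *: ((qneg i == l)%:R *: Caux rho n k (qneg j) w).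
Proof.
elim: n k l w => [|n IH] k l w; first exact: rho_rep.2.
rewrite /= raddf_sum scaler_sumr -sumrB.
(* Leibniz rule: [F_ij, F_kp C_pl] = [F_ij, F_kp] C_pl + s F_kp [F_ij, C_pl]. *)
have leibniz p : rho i j (qsgn (qpar p) *: rho k p (Caux rho n p l w))
    - ssign i j k l *: (qsgn (qpar p) *: rho k p (Caux rho n p l (rho i j w)))
  = qsgn (qpar p) *: (rho i j (rho k p (Caux rho n p l w))
                      - ssign i j k p *: rho k p (rho i j (Caux rho n p l w)))
    + (qsgn (qpar p) * ssign i j k p) *: rho k p (rho i j (Caux rho n p l w)
                      - ssign i j p l *: Caux rho n p l (rho i j w)).
  rewrite rhoZ rhoB rhoZ !scalerBr !scalerA -(ssignM i j k p l).
  by rewrite addrA subrK; congr (_ - _ *: _); ring.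
rewrite (eq_bigr _ (fun p _ => leibniz p)).
under eq_bigr => p _ do rewrite (rho_rep.2 i j k p) -/(ssign i j k p) IH.
under eq_bigr => p _ do rewrite !rhoD !rhoN !rhoZ !scalerDr !scalerN !scalerA.
rewrite !(big_split, sumrB) /= !sumrN.
rewrite !sum_scale_delta !sum_scale_delta'.
have sign_i : qsgn (qpar i) * ssign i j k i = qsgn (qpar j) * ssign i j k j.
  rewrite /ssign !qsgnE.
  by case: (qpar i) (qpar j) (qpar k) => [] [] [] /=; ring.
have sign_negi : qsgn (qpar (qneg i)) * ssign i j k (qneg i)
               = qsgn (qpar (qneg j)) * ssign i j k (qneg j).
  rewrite /ssign /qpar /= !qsgnE.
  by case: i.2 j.2 k.2 => [] [] [] /=; ring.
rewrite sign_i sign_negi addr_cancel_crossed !scaler_sumr.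
by congr (_ - _ + _ - _); apply: eq_bigr => p _; rewrite !scalerA;
  congr (_ *: _); rewrite -?(ssignM i j k p l); ring.
Qed.

(* Since F_{-k,-l} = F_{kl} and (-1)^{bar k} flips under k |-> -k,
   C^{(n+1)}_{-i,-j} = (-1)^n C^{(n+1)}_{ij}. *)
Lemma Caux_neg n i j w :
  Caux rho n (qneg i) (qneg j) w = qsgn (odd n) *: Caux rho n i j w.
Proof.
elim: n i j w => [|n IH] i j w /=; first by rewrite rho_rep.1 qsgnE scale1r.
rewrite (reindex_inj qneg_inj) scaler_sumr; apply: eq_bigr => p _.
rewrite IH rho_rep.1 rhoZ !scalerA /qpar /= !qsgn_neg.
by congr (_ *: _); ring.
Qed.

(* The diagonal entry C_{xx} commutes with F_{xx}; hence it preserves the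
   F_{xx}-eigenvectors. *)
Lemma rho_Caux_diag {x} {v : V} {c : K} :
  rho x x v = c *: v -> forall n, rho x x (Caux rho n x x v) = c *: Caux rho n x x v.
Proof.
move=> eigen_v n; have := Caux_bracket n x x x x v.
rewrite eigen_v CauxZ eqxx (qneg_neq x) eq_sym (qneg_neq x) /ssign addbb /=.
rewrite qsgnE !scale1r !scale0r subrr add0r subr0.
by move/eqP; rewrite subr_eq0 => /eqP.
Qed.

Section HighestWeight.
Variable v : V.
Hypothesis highest : forall x y, (qabs x < qabs y)%N -> rho x y v = 0.

(* For |k| < |p|, F_{kp} moves the row index of C_{pi} v from p to k
   (the remaining bracket terms need |k| = |i|). *)
Lemma rho_Caux_lower n k p i :
  (qabs k < qabs p)%N -> qabs k != qabs i ->
  rho k p (Caux rho n p i v) = Caux rho n k i v.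
Proof.
move=> lt_kp ne_ki; have := Caux_bracket n k p p i v.
rewrite highest // Caux0 scaler0 subr0 eqxx scale1r (qneg_neq p).
rewrite (qabs_neq k i ne_ki) (qabs_neq (qneg k) i ne_ki).
by rewrite !scale0r !scaler0 !subr0 addr0.
Qed.

Lemma Caux_lower_hw n k i : (qabs k < qabs i)%N -> Caux rho n k i v = 0.
Proof.
elim: n k => [|n IH] k lt_ki /=; first exact: highest.
rewrite sum_qidx big1 // => b _.
have [lt_bi | le_ib] := ltnP b.+1 (qabs i).
  by rewrite !IH // !rho0 !scaler0 addr0.
have lt_kb : (qabs k < b.+1)%N := leq_trans lt_ki le_ib.
have ne_ki : qabs k != qabs i by rewrite neq_ltn lt_ki.
rewrite !rho_Caux_lower // !qsgnE scale1r scaleN1r.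
exact: subrr.
Qed.

Lemma rho_Caux_upper n x p :
  qpar x = false -> (qabs x < qabs p)%N ->
  rho x p (Caux rho n p x v) = Caux rho n x x v - qsgn (qpar p) *: Caux rho n p p v.
Proof.
move=> pos_x lt_xp; have := Caux_bracket n x p p x v.
rewrite highest // Caux0 scaler0 subr0 !eqxx !scale1r (qneg_neq p).
rewrite eq_sym (qneg_neq x) !scale0r !scaler0 subr0 addr0 /ssign pos_x /=.
by case: (qpar p).
Qed.

Section TopDiagonalEntry.
Variables (a : 'I_N) (lambda : K).
Hypothesis weight : rho (qpos a) (qpos a) v = lambda *: v.

Definition top_summand n (p : qidx N) : V :=
  qsgn (qpar p) *: rho (qpos a) p (Caux rho n p (qpos a) v).

Lemma Caux_top_sum n :
  Caux rho n.+1 (qpos a) (qpos a) v =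
  \sum_(b < N) (top_summand n (b, false) + top_summand n (b, true)).
Proof. exact: sum_qidx. Qed.

(* Indices of absolute value below |a| contribute nothing ... *)
Lemma top_pair_below n (b : 'I_N) :
  (b < a)%N -> top_summand n (b, false) + top_summand n (b, true) = 0.
Proof.
move=> lt_ba.
by rewrite /top_summand !Caux_lower_hw // !rho0 !scaler0 addr0.
Qed.

(* ... and neither do those above |a| when n + 1 is even: the two
   signed indices give C_{aa} v - C_{bb} v and -(C_{aa} v + C_{-b,-b} v),
   while C_{-b,-b} = - C_{bb}. *)
Lemma top_pair_above n (b : 'I_N) : odd n ->
  (a < b)%N -> top_summand n (b, false) + top_summand n (b, true) = 0.
Proof.
move=> odd_n lt_ab.
have neg_b : Caux rho n (b, true) (b, true) v = - Caux rho n (b, false) (b, false) v.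
  by rewrite -[(b, true)]/(qneg (b, false)) Caux_neg // odd_n qsgnE scaleN1r.
rewrite /top_summand !rho_Caux_upper // neg_b !qsgnE /=.
by rewrite !scale1r !scaleN1r opprK subrr.
Qed.

Lemma top_pair_diag n :
  top_summand n (qpos a) + top_summand n (qneg (qpos a)) =
  lambda *: Caux rho n (qpos a) (qpos a) v
  - rho (qneg (qpos a)) (qpos a) (Caux rho n (qneg (qpos a)) (qpos a) v).
Proof.
have F_sym := rho_rep.1 (qneg (qpos a)) (qpos a); rewrite qnegK in F_sym.
rewrite /top_summand (rho_Caux_diag weight) F_sym !qsgnE /=.
by rewrite scale1r scaleN1r.
Qed.

Lemma Caux_top_diag n : odd n ->
  Caux rho n.+1 (qpos a) (qpos a) v =
  lambda *: Caux rho n (qpos a) (qpos a) v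
  - rho (qneg (qpos a)) (qpos a) (Caux rho n (qneg (qpos a)) (qpos a) v).
Proof.
move=> odd_n; rewrite Caux_top_sum (bigD1 a) //= big1 ?addr0.
  exact: top_pair_diag.
move=> b ne_ba; case: (ltngtP b a) => [lt_ba | lt_ab | eq_ba].
- exact: top_pair_below.
- exact: top_pair_above.
- by move: ne_ba; rewrite (val_inj eq_ba) eqxx.
Qed.

End TopDiagonalEntry.
End HighestWeight.
End Representation.

Theorem mainTheorem6 (K : numClosedFieldType) (N : nat) (V : lmodType K)
    (rho : qidx N -> qidx N -> {linear V -> V})
    (v : V) (lambda : 'I_N -> K) :
  (0 < N)%N ->
  is_qrep rho ->
  (forall i j : qidx N, (qabs i < qabs j)%N -> rho i j v = 0) ->
  (forall a : 'I_N, rho (qpos a) (qpos a) v = lambda a *: v) ->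
  forall (m : nat) (a : 'I_N), (1 <= m)%N ->
    Cact rho (2 * m).+1 (qpos a) (qpos a) v =
      lambda a *: Cact rho (2 * m) (qpos a) (qpos a) v
      - rho (qneg (qpos a)) (qpos a) (Cact rho (2 * m) (qneg (qpos a)) (qpos a) v).
Proof.
move=> _ rho_rep highest weight m a m_pos.
have [n def_2m] : exists n, (2 * m)%N = n.+1.
  by exists (2 * m).-1; rewrite prednK // muln_gt0.
have odd_n : odd n by move: (oddM 2 m); rewrite def_2m /= => /negbFE.
by rewrite /Cact def_2m !succnK; apply: Caux_top_diag.
Qed.
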